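(* Let $\mathfrak{G}=(Y,R,E)$ be a descriptive $\mathsf{MS4}$-frame and $Q=E\circ R$. Then $\mathfrak{G}\vDash\mathsf{LKur}$ if and only if there is no morphism of descriptive $\mathsf{MS4}$-frames from a closed $Q$-upset of $\mathfrak{G}$ onto $\mathfrak{K}$, where $\mathfrak{K}=(\{a,b\},R,E)$ is the (discrete) frame with $R[a]=\{a,b\}$, $R[b]=\{b\}$, $E[a]=E[b]=\{a,b\}$.
   Context: $\mathsf{MS4}$ is the smallest set of formulas in the classical bimodal language $\mathcal{L}_{\Box\forall}$ containing all classical tautologies, the $\mathsf{S4}$ axioms for $\Box$, the $\mathsf{S5}$ axioms for $\forall$, and $\Box\forall p\to\forall\Box p$, closed under modus ponens, substitution, $\Box$- and $\forall$-necessitation; $\Diamond=\neg\Box\neg$. $\mathsf{LKur}=\mathsf{MS4}+\Box\forall\Diamond\Box p\to\Diamond\forall p$. A descriptive $\mathsf{MS4}$-frame is $(Y,R,E)$ with $Y$ a Stone space, $R$ a continuous quasi-order, $E$ a continuous equivalence relation (continuous: $R[x]=\{y:xRy\}$ closed for all $x$, $R^{-1}[U]$ clopen for clopen $U$), such that $xEy$, $yRz$ imply $\exists u$ with $xRu$, $uEz$. Valuations assign clopen sets; $\Box$ via $R$, $\forall$ via $E$. $x(E\circ R)y$ iff there is $z$ with $xRz$ and $zEy$. A $Q$-upset is $U$ with $x\in U$, $xQy\Rightarrow y\in U$; a closed $Q$-upset is regarded as a descriptive $\mathsf{MS4}$-frame with the subspace topology and restricted relations. A morphism of descriptive $\mathsf{MS4}$-frames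 $f:(Y_1,R_1,E_1)\to(Y_2,R_2,E_2)$ is a continuous map with $R_2[f(x)]=f[R_1[x]]$ and $E_2[f(x)]=f[E_1[x]]$ for all $x\in Y_1$. *)

From HB Require Import structures.
From mathcomp Require Import all_boot all_order all_algebra.
From mathcomp Require Import all_classical all_reals all_analysis.
Set Implicit Arguments. Unset Strict Implicit. Unset Printing Implicit Defensive.
Local Open Scope classical_set_scope.

Inductive fm : Type :=
| Var : nat -> fm
| Bot : fm
| Imp : fm -> fm -> fm
| Box : fm -> fm
| All : fm -> fm.

Definition Neg (p : fm) : fm := Imp p Bot.
Definition Dia (p : fm) : fm := Neg (Box (Neg p)).
Definition Ex  (p : fm) : fm := Neg (All (Neg p)).

(* Classical tautologies: formulas true under every Boolean evaluation in
   which variables and modalized subformulas are treated as atoms. *)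
Fixpoint beval (g : fm -> bool) (p : fm) : bool :=
  match p with
  | Bot => false
  | Imp a b => implb (beval g a) (beval g b)
  | _ => g p
  end.
Definition tautology (p : fm) : Prop := forall g, beval g p = true.

Fixpoint subst (s : nat -> fm) (p : fm) : fm :=
  match p with
  | Var n => s n
  | Bot => Bot
  | Imp a b => Imp (subst s a) (subst s b)
  | Box a => Box (subst s a)
  | All a => All (subst s a)
  end.

Definition pp := Var 0.
Definition qq := Var 1.

Inductive MS4_plus (extra : fm -> Prop) : fm -> Prop :=
| ax_taut p : tautology p -> MS4_plus extra p
| ax_boxK : MS4_plus extra (Imp (Box (Imp pp qq)) (Imp (Box pp) (Box qq)))
| ax_boxT : MS4_plus extra (Imp (Box pp) pp)
| ax_box4 : MS4_plus extra (Imp (Box pp) (Box (Box pp)))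
| ax_allK : MS4_plus extra (Imp (All (Imp pp qq)) (Imp (All pp) (All qq)))
| ax_allT : MS4_plus extra (Imp (All pp) pp)
| ax_all4 : MS4_plus extra (Imp (All pp) (All (All pp)))
| ax_all5 : MS4_plus extra (Imp (Neg (All pp)) (All (Neg (All pp))))
| ax_left : MS4_plus extra (Imp (Box (All pp)) (All (Box pp)))
| ax_extra p : extra p -> MS4_plus extra p
| r_mp p q : MS4_plus extra (Imp p q) -> MS4_plus extra p -> MS4_plus extra q
| r_subst s p : MS4_plus extra p -> MS4_plus extra (subst s p)
| r_necBox p : MS4_plus extra p -> MS4_plus extra (Box p)
| r_necAll p : MS4_plus extra p -> MS4_plus extra (All p).

Definition MS4 : fm -> Prop := MS4_plus (fun _ => False).

Definition kuroda_axiom : fm := Imp (Box (All (Dia (Box pp)))) (Dia (All pp)).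
Definition LKur : fm -> Prop := MS4_plus (fun p => p = kuroda_axiom).

Definition image_rel {Y : Type} (R : Y -> Y -> Prop) (x : Y) : set Y :=
  [set y | R x y].
Definition preimage_rel {Y : Type} (R : Y -> Y -> Prop) (U : set Y) : set Y :=
  [set x | exists2 y, R x y & U y].

Definition stone_space (Y : topologicalType) : Prop :=
  [/\ compact [set: Y], hausdorff_space Y & zero_dimensional Y].

Definition continuous_rel {Y : topologicalType} (R : Y -> Y -> Prop) : Prop :=
  (forall x, closed (image_rel R x)) /\
  (forall U : set Y, clopen U -> clopen (preimage_rel R U)).

Definition quasi_order {Y : Type} (R : Y -> Y -> Prop) : Prop :=
  (forall x, R x x) /\ (forall x y z, R x y -> R y z -> R x z).
Definition equivalence_rel {Y : Type} (E : Y -> Y -> Prop) : Prop :=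
  [/\ forall x, E x x, forall x y, E x y -> E y x
    & forall x y z, E x y -> E y z -> E x z].

Definition descriptive_ms4 (Y : topologicalType) (R E : Y -> Y -> Prop) : Prop :=
  [/\ stone_space Y, quasi_order R, equivalence_rel E,
      continuous_rel R /\ continuous_rel E &
      forall x y z, E x y -> R y z -> exists2 u, R x u & E u z].

Fixpoint sem {Y : Type} (R E : Y -> Y -> Prop) (v : nat -> set Y) (p : fm)
  : set Y :=
  match p with
  | Var n => v n
  | Bot => set0
  | Imp a b => [set x | sem R E v a x -> sem R E v b x]
  | Box a => [set x | forall y, R x y -> sem R E v a y]
  | All a => [set x | forall y, E x y -> sem R E v a y]
  end.

Definition frame_valid {Y : topologicalType} (R E : Y -> Y -> Prop) (p : fm)
  : Prop :=
  forall v : nat -> set Y, (forall n, clopen (v n)) -> forall x, sem R E v p x.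

Definition frame_validates {Y : topologicalType} (R E : Y -> Y -> Prop)
  (L : fm -> Prop) : Prop := forall p, L p -> frame_valid R E p.

Definition comp_ER {Y : Type} (R E : Y -> Y -> Prop) (x y : Y) : Prop :=
  exists2 z, R x z & E z y.

Definition upset {Y : Type} (Q : Y -> Y -> Prop) (U : set Y) : Prop :=
  forall x y, U x -> Q x y -> U y.

(* Morphism of descriptive MS4-frames from the closed upset U (subspace
   topology, restricted relations) to (Y2, R2, E2). *)
Definition ms4_morphism_on {Y1 Y2 : topologicalType}
  (U : set Y1) (R1 E1 : Y1 -> Y1 -> Prop) (R2 E2 : Y2 -> Y2 -> Prop)
  (f : Y1 -> Y2) : Prop :=
  [/\ {within U, continuous f},
      forall x, U x -> image_rel R2 (f x) = f @` (image_rel R1 x `&` U) &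
      forall x, U x -> image_rel E2 (f x) = f @` (image_rel E1 x `&` U)].

(* The frame K = ({a,b}, R, E) with a := true, b := false, discrete topology
   (bool carries the discrete topology in mathcomp-analysis). *)
Definition K_R (x y : bool) : Prop := x = true \/ y = false.
  (* R[a] = {a,b}, R[b] = {b} *)
Definition K_E (x y : bool) : Prop := True.

From HB Require Import structures.
From mathcomp Require Import all_boot all_order all_algebra.
From mathcomp Require Import all_classical all_reals all_analysis.
Local Open Scope classical_set_scope.

(* Beyond MS4, which is sound on descriptive frames, LKur only adds Kuroda's
   axiom [Box All Dia Box p -> Dia All p], so it suffices to test that axiom on
   clopen [p].  Given an onto morphism from a closed Q-upset, take for [p] a
   clopen set separating its two fibres (they are disjoint closed sets of a
   Stone space): every point of the upset satisfies the antecedent and refutes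
   the consequent.  Conversely, if the axiom fails at [x] for a clopen [p], the
   clopen Q-upset [Box All (Dia Box p /\ Ex ~p /\ Ex Box p)] contains an
   R-successor of [x], and sending [Box p] to [b] and its complement to [a] is an
   onto morphism. *)

Definition box_rel {Y : Type} (R : Y -> Y -> Prop) (A : set Y) : set Y :=
  [set x | forall y, R x y -> A y].

Lemma box_relE {Y : Type} (R : Y -> Y -> Prop) (A : set Y) :
  box_rel R A = ~` preimage_rel R (~` A).
Proof.
apply/seteqP; split => x /=.
- by move=> Ax [y Rxy nAy]; exact/nAy/Ax.
- by move=> nx y Rxy; apply: contrapT => nAy; apply: nx; exists y.
Qed.

Lemma upset_box_rel {Y : Type} (R : Y -> Y -> Prop) (A : set Y) :
  (forall x y z, R x y -> R y z -> R x z) -> upset R (box_rel R A).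
Proof. by move=> Rtrans x y Ax Rxy z Ryz; exact/Ax/(Rtrans _ _ _ Rxy Ryz). Qed.

Lemma clopen_box_rel (Y : topologicalType) (R : Y -> Y -> Prop) (A : set Y) :
  continuous_rel R -> clopen A -> clopen (box_rel R A).
Proof.
move=> [_ cR] cA; rewrite box_relE; apply: (clopenC set0); apply: cR.
exact: (clopenC set0).
Qed.

Section Semantics.
Context {Y : Type} (R E : Y -> Y -> Prop).

Lemma sem_subst v s p :
  sem R E v (subst s p) = sem R E (fun n => sem R E v (s n)) p.
Proof. by elim: p => [n||a IHa b IHb|a IHa|a IHa] //=; rewrite ?IHa ?IHb. Qed.

Lemma sem_Dia v p : sem R E v (Dia p) = preimage_rel R (sem R E v p).
Proof.
apply/seteqP; split => x /=.
- move=> nbox; apply: contrapT => nx.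
  by apply: nbox => y Rxy py; apply: nx; exists y.
- by move=> [y Rxy py] nbox; exact: nbox y Rxy py.
Qed.

Lemma beval_sem v x p :
  beval (fun q => `[< sem R E v q x >]) p = `[< sem R E v p x >].
Proof.
elim: p => [n||a IHa b IHb|a IHa|a IHa] //=; first by rewrite asboolF.
by rewrite asbool_imply IHa IHb.
Qed.

Lemma sem_tautology v x p : tautology p -> sem R E v p x.
Proof.
by move=> /(_ (fun q => `[< sem R E v q x >])); rewrite beval_sem => /asboolP.
Qed.

End Semantics.

Lemma clopen_sem (Y : topologicalType) (R E : Y -> Y -> Prop) v p :
  continuous_rel R -> continuous_rel E -> (forall n, clopen (v n)) ->
  clopen (sem R E v p).
Proof.
move=> cR cE cv; elim: p => [n||a IHa b IHb|a IHa|a IHa].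
- exact: cv.
- exact: clopen0.
- have -> : sem R E v (Imp a b) = ~` sem R E v a `|` sem R E v b.
    apply/seteqP; split => x /=.
    + by have [ax|nax] := pselect (sem R E v a x) => ab; [right; exact: ab|left].
    + by case=> [nax ax|bx _] //; case: (nax ax).
  exact: clopenU (clopenC set0 IHa) IHb.
- exact: clopen_box_rel.
- exact: clopen_box_rel.
Qed.

Section Soundness.
Variables (Y : topologicalType) (R E : Y -> Y -> Prop).
Hypotheses (Rrefl : forall x, R x x)
  (Rtrans : forall x y z, R x y -> R y z -> R x z)
  (Erefl : forall x, E x x) (Esym : forall x y, E x y -> E y x)
  (Etrans : forall x y z, E x y -> E y z -> E x z)
  (cR : continuous_rel R) (cE : continuous_rel E)
  (ER_commute : forall x y z, E x y -> R y z -> exists2 u, R x u & E u z).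

Lemma MS4_plus_valid extra :
  (forall p, extra p -> frame_valid R E p) ->
  frame_validates R E (MS4_plus extra).
Proof.
move=> extra_valid p; elim => {p} [p taut|||||||||p /extra_valid //|
  p q _ Hpq _ Hp|s p _ Hp|p _ Hp|p _ Hp] v cv x /=.
- exact: sem_tautology.
- by move=> Hpq Hp y Rxy; exact: Hpq _ Rxy (Hp _ Rxy).
- by move=> Hp; exact: Hp _ (Rrefl x).
- by move=> Hp y Rxy z Ryz; exact: Hp _ (Rtrans _ _ _ Rxy Ryz).
- by move=> Hpq Hp y Exy; exact: Hpq _ Exy (Hp _ Exy).
- by move=> Hp; exact: Hp _ (Erefl x).
- by move=> Hp y Exy z Eyz; exact: Hp _ (Etrans _ _ _ Exy Eyz).
- move=> nAp y Exy Ayp; apply: nAp => z Exz.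
  exact/Ayp/(Etrans _ _ _ (Esym _ _ Exy) Exz).
- move=> Hp y Exy z Ryz; have [u Rxu Euz] := ER_commute _ _ _ Exy Ryz.
  exact: Hp _ Rxu _ Euz.
- exact: Hpq v cv x (Hp v cv x).
- by rewrite sem_subst; apply: Hp => n; exact: clopen_sem.
- by move=> y _; exact: Hp.
- by move=> y _; exact: Hp.
Qed.

Lemma LKur_validP : frame_validates R E LKur <-> frame_valid R E kuroda_axiom.
Proof.
split => [valid|kur]; first exact/valid/ax_extra.
by apply: MS4_plus_valid => p ->.
Qed.

End Soundness.

Lemma frame_valid_kurodaP (Y : topologicalType) (R E : Y -> Y -> Prop) :
  frame_valid R E kuroda_axiom <->
  forall P : set Y, clopen P ->
    box_rel R (box_rel E (preimage_rel R (box_rel R P))) `<=`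
    preimage_rel R (box_rel E P).
Proof.
have kurE v : sem R E v kuroda_axiom =
    [set x | box_rel R (box_rel E (sem R E v (Dia (Box pp)))) x ->
             sem R E v (Dia (All pp)) x] by [].
split => [valid P clP x | kur v cv x].
- by have := valid (fun _ => P) (fun _ => clP) x; rewrite kurE !sem_Dia.
- by rewrite kurE !sem_Dia; exact: kur.
Qed.

Lemma stone_clopen_separation (Y : topologicalType) (A B : set Y) :
  stone_space Y -> closed A -> closed B -> A `<=` ~` B ->
  exists V, [/\ clopen V, A `<=` V & V `<=` ~` B].
Proof.
move=> [cptY hY zdY] clA clB AnB; apply: contrapT => noV.
pose F := filter_from [set D : set Y | clopen D /\ A `<=` D] (fun D => D `&` B).
have FF : Filter F.
  apply: filter_from_filter; first by exists setT; split => //; exact: clopenT.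
  move=> C D [clC AC] [clD AD]; exists (C `&` D).
    by split; [exact: clopenI | move=> y Ay; split; [exact: AC | exact: AD]].
  by move=> y [[Cy Dy] By].
have PF : ProperFilter F.
  apply: filter_from_proper => D [clD AD]; apply: contrapT => DnB.
  by apply: noV; exists D; split => // y Dy By; apply: DnB; exists y.
have FB : F B by exists setT; [split => //; exact: clopenT | move=> y []].
have [b [Bb clusterb]] := subclosed_compact clB cptY (@subsetT _ B) PF FB.
(* A clopen neighbourhood [C] of [b] inside [~` A] gives [F (~` C `&` B)],
   which cannot cluster at [b]. *)
have [C [Cb clC] CnA] := @zero_dimensional_cvg _ b hY zdY cptY (~` A)
  (open_nbhs_nbhs (conj (closed_openC clA) (fun Ab => AnB b Ab Bb))).
have FnC : F (~` C `&` B).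
  exists (~` C) => //; split; first exact: clopenC.
  by move=> y Ay Cy; exact: CnA Cy Ay.
have [y [[nCy _] Cy]] := clusterb _ _ FnC (open_nbhs_nbhs (conj clC.1 Cb)).
exact: nCy Cy.
Qed.

Lemma continuous_asbool (T : topologicalType) (A : set T) :
  clopen A -> continuous (fun z => `[< A z >]).
Proof.
move=> [oA clA] z W /nbhs_singleton Wz.
have [Az|nAz] := pselect (A z).
- apply: filterS (open_nbhs_nbhs (conj oA Az)) => y Ay /=.
  by rewrite (asboolT Ay) -(asboolT Az).
- apply: filterS (open_nbhs_nbhs (conj (closed_openC clA) nAz)) => y nAy /=.
  by rewrite (asboolF nAy) -(asboolF nAz).
Qed.

Section ComposedUpsets.
Context {Y : Type} {R E : Y -> Y -> Prop}.

Lemma upset_comp_ER_R {U : set Y} :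
  (forall x, E x x) -> upset (comp_ER R E) U -> upset R U.
Proof. by move=> Erefl upU x y Ux Rxy; apply: upU Ux _; exists y. Qed.

Lemma upset_comp_ER_E {U : set Y} :
  (forall x, R x x) -> upset (comp_ER R E) U -> upset E U.
Proof. by move=> Rrefl upU x y Ux Exy; apply: upU Ux _; exists x. Qed.

Lemma upset_comp_ER_box (A : set Y) :
  (forall x y z, R x y -> R y z -> R x z) ->
  (forall x y z, E x y -> E y z -> E x z) ->
  (forall x y z, E x y -> R y z -> exists2 u, R x u & E u z) ->
  upset (comp_ER R E) (box_rel R (box_rel E A)).
Proof.
move=> Rtrans Etrans ER_commute x y Ax [z Rxz Ezy] t Ryt w Etw.
have [u Rzu Eut] := ER_commute _ _ _ Ezy Ryt.
exact: Ax u (Rtrans _ _ _ Rxz Rzu) w (Etrans _ _ _ Eut Etw).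
Qed.

End ComposedUpsets.

Lemma kuroda_refutation_of_onto_morphism {Y : topologicalType}
    {R E : Y -> Y -> Prop} {U : set Y} {f : Y -> bool} :
  stone_space Y -> (forall x, E x x) -> closed U -> upset (comp_ER R E) U ->
  ms4_morphism_on U R E K_R K_E f -> f @` U = [set: bool] ->
  exists P x, [/\ clopen P,
    box_rel R (box_rel E (preimage_rel R (box_rel R P))) x &
    ~ preimage_rel R (box_rel E P) x].
Proof.
move=> stY Erefl clU upU [f_cont f_R f_E] f_onto.
have UR := upset_comp_ER_R Erefl upU.
have fiber_closed b : closed (U `&` f @^-1` [set b]).
  rewrite closed_setSI //; apply: preimage_closed => //.
  exact: discrete_closed.
have [V [clV fiber0V Vfiber1]] :
    exists V, [/\ clopen V, U `&` f @^-1` [set false] `<=` V &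
                           V `<=` ~` (U `&` f @^-1` [set true])].
  apply: stone_clopen_separation => // y [_ /= fy] [_ /=].
  by rewrite fy.
have [x Ux _] : (f @` U) true by rewrite f_onto.
exists V, x; split => //.
- move=> y Rxy z Eyz.
  have Uz : U z by apply: upU Ux _; exists y.
  have : image_rel K_R (f z) false by right.
  rewrite f_R // => -[w [Rzw Uw] fw]; exists w => // t Rwt.
  have Ut := UR _ _ Uw Rwt.
  have : image_rel K_R (f w) (f t) by rewrite f_R //; exists t.
  by rewrite fw /image_rel /K_R /= => -[// | ft]; exact: fiber0V.
- move=> [y Rxy Vy]; have Uy := UR _ _ Ux Rxy.
  have : image_rel K_E (f y) true by [].
  rewrite f_E // => -[z [Eyz Uz] fz].
  exact: Vfiber1 (Vy z Eyz) (conj Uz fz).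
Qed.

Section KurodaRefutationMorphism.
Variables (Y : topologicalType) (R E : Y -> Y -> Prop) (P : set Y) (x : Y).
Hypotheses (Rrefl : forall x, R x x)
  (Rtrans : forall x y z, R x y -> R y z -> R x z)
  (Erefl : forall x, E x x) (Esym : forall x y, E x y -> E y x)
  (Etrans : forall x y z, E x y -> E y z -> E x z)
  (cR : continuous_rel R) (cE : continuous_rel E)
  (ER_commute : forall x y z, E x y -> R y z -> exists2 u, R x u & E u z)
  (clP : clopen P)
  (x_box_all_dia_box : box_rel R (box_rel E (preimage_rel R (box_rel R P))) x)
  (x_not_dia_all : ~ preimage_rel R (box_rel E P) x).

(* [U] is the truth set of [Box All (Dia Box p /\ Ex ~p /\ Ex Box p)]. *)
Let B := box_rel R P.
Let Psi := preimage_rel R B `&` preimage_rel E (~` P) `&` preimage_rel E B.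
Let U := box_rel R (box_rel E Psi).
Let f z := `[< ~ B z >].

Let f_false z : B z -> f z = false.
Proof. by move=> Bz; apply: asboolF. Qed.

Let f_true z : ~ B z -> f z = true.
Proof. exact: asboolT. Qed.

Let upset_B : upset R B. Proof. exact: upset_box_rel. Qed.

Let Psi_of_U z : U z -> Psi z.
Proof. by move=> Uz; exact: Uz _ (Rrefl z) _ (Erefl z). Qed.

Let upU : upset (comp_ER R E) U. Proof. exact: upset_comp_ER_box. Qed.

Let UR : upset R U. Proof. exact: upset_comp_ER_R Erefl upU. Qed.

Let UE : upset E U. Proof. exact: upset_comp_ER_E Rrefl upU. Qed.

Let clopenU : clopen U.
Proof.
have [[_ cR'] [_ cE']] := (cR, cE).
apply/clopen_box_rel/clopen_box_rel => //; apply: clopenI; first apply: clopenI.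
- exact/cR'/clopen_box_rel.
- exact/cE'/(clopenC set0).
- exact/cE'/clopen_box_rel.
Qed.

Let U_nonempty : exists s, U s.
Proof.
have [s Rxs Bs] := x_box_all_dia_box x (Rrefl x) x (Erefl x).
exists s => y Rsy w Eyw; have Rxy := Rtrans _ _ _ Rxs Rsy.
split; [split|].
- exact: x_box_all_dia_box Rxy w Eyw.
- have [u Eyu nPu] : exists2 u, E y u & ~ P u.
    apply: contrapT => allP; apply: x_not_dia_all; exists y => // u Eyu.
    by apply: contrapT => nPu; apply: allP; exists u.
  by exists u => //; exact: Etrans (Esym _ _ Eyw) Eyu.
- by exists y; [exact: Esym | exact: upset_B Bs Rsy].
Qed.

Let f_R z : U z -> image_rel K_R (f z) = f @` (image_rel R z `&` U).
Proof.
move=> Uz; have [[[t Rzt Bt] _] _] := Psi_of_U _ Uz.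
apply/seteqP; split => [b|_ [w [Rzw _] <-]]; rewrite /image_rel /K_R /=.
- have [Bz|nBz] := pselect (B z).
  + rewrite f_false // => -[//|->].
    by exists z; [split => //; exact: Rrefl | exact: f_false].
  + case: b => _.
    * by exists z; [split => //; exact: Rrefl | exact: f_true].
    * by exists t; [split => //; exact: UR Uz Rzt | exact: f_false].
- have [Bz|nBz] := pselect (B z); last by left; exact: f_true.
  by right; apply/f_false/(upset_B _ _ Bz Rzw).
Qed.

Let f_E z : U z -> image_rel K_E (f z) = f @` (image_rel E z `&` U).
Proof.
move=> Uz; have [[_ [u Ezu nPu]] [u' Ezu' Bu']] := Psi_of_U _ Uz.
apply/seteqP; split => // -[] _.
- exists u; [split => //; exact: UE Uz Ezu | apply: f_true => Bu].
  exact/nPu/Bu/Rrefl.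
- by exists u'; [split => //; exact: UE Uz Ezu' | exact: f_false].
Qed.

Lemma onto_morphism_of_kuroda_refutation :
  exists (U : set Y) (f : Y -> bool),
    [/\ closed U, upset (comp_ER R E) U,
        ms4_morphism_on U R E K_R K_E f & f @` U = [set: bool]].
Proof.
exists U, f; split => //; first by case: clopenU.
- split => [|z Uz|z Uz]; [|exact: f_R|exact: f_E].
  apply/continuous_subspaceT/continuous_asbool/(clopenC set0).
  exact: clopen_box_rel.
- have [s Us] := U_nonempty.
  apply/seteqP; split => // b _.
  have : image_rel K_E (f s) b by [].
  by rewrite f_E // => -[z [_ Uz] <-]; exists z.
Qed.

End KurodaRefutationMorphism.

Theorem theorem4p19 (Y : topologicalType) (R E : Y -> Y -> Prop) :
  descriptive_ms4 R E ->
  (frame_validates R E LKur <->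
   ~ (exists (U : set Y) (f : Y -> bool),
        [/\ closed U, upset (comp_ER R E) U,
            ms4_morphism_on U R E K_R K_E f & f @` U = [set: bool]])).
Proof.
move=> [stY [Rrefl Rtrans] [Erefl Esym Etrans] [cR cE] ER_commute].
rewrite LKur_validP // frame_valid_kurodaP; split.
- move=> kur [U [f [clU upU f_morph f_onto]]].
  have [P [x [clP x_box_all_dia_box x_not_dia_all]]] :=
    kuroda_refutation_of_onto_morphism stY Erefl clU upU f_morph f_onto.
  exact/x_not_dia_all/(kur _ clP).
- move=> no_morphism P clP x x_box_all_dia_box; apply: contrapT => x_not_dia_all.
  by apply: no_morphism; apply: (onto_morphism_of_kuroda_refutation _ _ _ P x).
Qed.
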